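(* For all real numbers $a,b,c>0$, \[ \frac{(ab+ac+bc)^{2}}{\sqrt{a^{2}+b^{2}+c^{2}}\,\sqrt{a^{2}+b^{2}+c^{2}+3ab+3bc+3ca}} \leq \frac{a^{2}b}{\sqrt{b^{2}+3ac}} + \frac{b^{2}c}{\sqrt{c^{2}+3ab}} + \frac{c^{2}a}{\sqrt{a^{2}+3bc}}. \] *)

From Stdlib Require Export Reals.

(* Write x, y, z for the three square roots on the right.  Engel's form of
   Cauchy-Schwarz with weights b x, c y, a z gives
   (ab + bc + ca)^2 <= RHS * (b x + c y + a z), and Cauchy-Schwarz again bounds
   b x + c y + a z by sqrt (a^2 + b^2 + c^2) * sqrt (x^2 + y^2 + z^2), where
   x^2 + y^2 + z^2 is exactly the second radicand on the left. *)
From Stdlib Require Import Reals Lra Psatz.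
Open Scope R_scope.

Lemma cauchy_schwarz3 (u1 u2 u3 v1 v2 v3 : R) :
  (u1*v1 + u2*v2 + u3*v3)^2 <= (u1^2 + u2^2 + u3^2) * (v1^2 + v2^2 + v3^2).
Proof.
  assert (lagrange : (u1^2 + u2^2 + u3^2) * (v1^2 + v2^2 + v3^2)
                     - (u1*v1 + u2*v2 + u3*v3)^2
                   = (u1*v2 - u2*v1)^2 + (u2*v3 - u3*v2)^2 + (u3*v1 - u1*v3)^2)
    by ring.
  pose proof (pow2_ge_0 (u1*v2 - u2*v1)).
  pose proof (pow2_ge_0 (u2*v3 - u3*v2)).
  pose proof (pow2_ge_0 (u3*v1 - u1*v3)).
  lra.
Qed.

Lemma cauchy_schwarz3_sqrt (u1 u2 u3 v1 v2 v3 : R) :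
  u1*v1 + u2*v2 + u3*v3
    <= sqrt (u1^2 + u2^2 + u3^2) * sqrt (v1^2 + v2^2 + v3^2).
Proof.
  assert (hu : 0 <= u1^2 + u2^2 + u3^2) by nra.
  rewrite <- sqrt_mult_alt by exact hu.
  eapply Rle_trans; [apply Rle_abs |].
  rewrite <- sqrt_Rsqr_abs, Rsqr_pow2.
  apply sqrt_le_1_alt, cauchy_schwarz3.
Qed.

Lemma engel3 (u1 u2 u3 p1 p2 p3 : R) :
  0 < p1 -> 0 < p2 -> 0 < p3 ->
  (u1 + u2 + u3)^2 <= (u1^2/p1 + u2^2/p2 + u3^2/p3) * (p1 + p2 + p3).
Proof.
  intros h1 h2 h3.
  assert (sqrt_weight : forall u p, 0 < p ->
            u / sqrt p * sqrt p = u /\ (u / sqrt p)^2 = u^2/p /\ (sqrt p)^2 = p).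
  { intros u p hp.
    pose proof (sqrt_lt_R0 _ hp). pose proof (sqrt_sqrt _ (Rlt_le _ _ hp)).
    repeat split; [field; lra | | nra].
    replace ((u / sqrt p)^2) with (u^2 / (sqrt p * sqrt p)) by (field; lra).
    congruence. }
  destruct (sqrt_weight u1 p1 h1) as [e1 [f1 g1]].
  destruct (sqrt_weight u2 p2 h2) as [e2 [f2 g2]].
  destruct (sqrt_weight u3 p3 h3) as [e3 [f3 g3]].
  pose proof (cauchy_schwarz3 (u1 / sqrt p1) (u2 / sqrt p2) (u3 / sqrt p3)
                              (sqrt p1) (sqrt p2) (sqrt p3)) as cs.
  rewrite e1, e2, e3, f1, f2, f3, g1, g2, g3 in cs.
  exact cs.
Qed.

Lemma div_le_of_le_mul (N P Q S : R) :
  0 < P -> P <= Q -> 0 <= S -> N <= S * P -> N / Q <= S.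
Proof.
  intros hP hPQ hS hN.
  apply (Rmult_le_reg_r Q); [lra |].
  unfold Rdiv. rewrite Rmult_assoc, Rinv_l, Rmult_1_r by lra.
  nra.
Qed.

Theorem mainTheorem10 (a b c : R) (ha : 0 < a) (hb : 0 < b) (hc : 0 < c) :
  (a*b + a*c + b*c)^2
    / (sqrt (a^2 + b^2 + c^2) * sqrt (a^2 + b^2 + c^2 + 3*a*b + 3*b*c + 3*c*a))
  <= a^2*b / sqrt (b^2 + 3*a*c) + b^2*c / sqrt (c^2 + 3*a*b)
     + c^2*a / sqrt (a^2 + 3*b*c).
Proof.
  assert (hx : 0 < b^2 + 3*a*c) by nra.
  assert (hy : 0 < c^2 + 3*a*b) by nra.
  assert (hz : 0 < a^2 + 3*b*c) by nra.
  pose proof (sqrt_lt_R0 _ hx). pose proof (sqrt_sqrt _ (Rlt_le _ _ hx)).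
  pose proof (sqrt_lt_R0 _ hy). pose proof (sqrt_sqrt _ (Rlt_le _ _ hy)).
  pose proof (sqrt_lt_R0 _ hz). pose proof (sqrt_sqrt _ (Rlt_le _ _ hz)).
  set (x := sqrt (b^2 + 3*a*c)) in *.
  set (y := sqrt (c^2 + 3*a*b)) in *.
  set (z := sqrt (a^2 + 3*b*c)) in *.
  assert (radicand : a^2 + b^2 + c^2 + 3*a*b + 3*b*c + 3*c*a = z^2 + x^2 + y^2)
    by nra.
  assert (engel : (a*b + a*c + b*c)^2
                  <= (a^2*b/x + b^2*c/y + c^2*a/z) * (a*z + b*x + c*y)).
  { replace (a^2*b/x + b^2*c/y + c^2*a/z)
      with ((a*b)^2/(b*x) + (b*c)^2/(c*y) + (c*a)^2/(a*z)) by (field; lra).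
    replace (a*b + a*c + b*c) with (a*b + b*c + c*a) by ring.
    replace (a*z + b*x + c*y) with (b*x + c*y + a*z) by ring.
    apply engel3; nra. }
  apply (div_le_of_le_mul _ (a*z + b*x + c*y)); [nra | | | exact engel].
  - rewrite radicand. apply cauchy_schwarz3_sqrt.
  - repeat apply Rplus_le_le_0_compat; apply Rlt_le, Rdiv_lt_0_compat;
      try apply Rmult_lt_0_compat; try apply pow_lt; lra.
Qed.
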